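(* Let $f:\Delta^2\to\mathbb R$ be a smooth, $T\ltimes\mathcal S_2$-invariant, strictly plurisubharmonic function and let $r,s\in\mathbb R$. Let $\tilde f:\mathbb R^2\to\mathbb R$, $\tilde f(a_1,a_2)=f(\tanh a_1,\tanh a_2)$ (a $W_{\mathbb R^2}$-invariant function), and for $\sinh^2a_1\neq\sinh^2a_2$ define $$G_{\tilde f}(a_1,a_2)=\frac{r\sinh(2a_1)\frac{\partial\tilde f}{\partial a_1}(a_1,a_2)-s\sinh(2a_2)\frac{\partial\tilde f}{\partial a_2}(a_1,a_2)}{\sinh^2a_1-\sinh^2a_2}.$$ Then: (i) $\frac{\partial\tilde f}{\partial a_1}(a_1,a_2)>0$ whenever $a_1>0$ and $<0$ whenever $a_1<0$; in particular $\frac{\partial\tilde f}{\partial a_1}(0,a_2)=0$ for all $a_2\in\mathbb R$. (ii) $\frac{\partial\tilde f}{\partial a_2}(a_1,a_2)=\frac{\partial\tilde f}{\partial a_1}(a_2,a_1)$; in particular $\frac{\partial\tilde f}{\partial a_2}(a_1,0)=0$ for all $a_1$. (iii) If $G_{\tilde f}$ extends continuously to a strictly positive function on $\mathbb R^2$, then $r=s>0$; in particular $G_{\tilde f}$ is then $W_{\mathbb R^2}$-invariant.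
   Context: $\Delta$ is the unit disc in $\mathbb C$ and $\Delta^2$ the unit bidisc. $T=(S^1)^2$ acts on $\Delta^2$ by coordinatewise rotations and $\mathcal S_2$ by permutation of the two coordinates. $W_{\mathbb R^2}=(\mathbb Z_2)^2\rtimes\mathcal S_2$ acts on $\mathbb R^2$ by signed permutations of the coordinates. *)

From Stdlib Require Import Reals Lra ClassicalEpsilon.
Open Scope R_scope.

(* C is modelled as R*R (real part, imaginary part); C^2 as C*C. *)
Definition Cx : Type := (R * R)%type.
Definition C2 : Type := (Cx * Cx)%type.

Definition Cmul (a b : Cx) : Cx :=
  (fst a * fst b - snd a * snd b, fst a * snd b + snd a * fst b).
Definition Cconj (a : Cx) : Cx := (fst a, - snd a).
Definition Cnorm2 (a : Cx) : R := fst a * fst a + snd a * snd a.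

(* real coordinates of (z1,z2) = (x1 + i y1, x2 + i y2):
   0 = x1, 1 = y1, 2 = x2, 3 = y2 *)
Definition coord (p : C2) (i : nat) : R :=
  match i with
  | O => fst (fst p)
  | 1%nat => snd (fst p)
  | 2%nat => fst (snd p)
  | _ => snd (snd p)
  end.

Definition upd (p : C2) (i : nat) (t : R) : C2 :=
  match i with
  | O => ((t, snd (fst p)), snd p)
  | 1%nat => ((fst (fst p), t), snd p)
  | 2%nat => (fst p, (t, snd (snd p)))
  | _ => (fst p, (fst (snd p), t))
  end.

Definition bidisc (p : C2) : Prop := Cnorm2 (fst p) < 1 /\ Cnorm2 (snd p) < 1.

Definition has_pd (g : C2 -> R) (i : nat) (p : C2) (l : R) : Prop :=
  derivable_pt_lim (fun t => g (upd p i t)) (coord p i) l.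

Definition pd (g : C2 -> R) (i : nat) (p : C2) : R :=
  epsilon (inhabits 0) (fun l => has_pd g i p l).

Definition cont_at (g : C2 -> R) (p : C2) : Prop :=
  forall eps, 0 < eps -> exists delta, 0 < delta /\
    forall q, (forall i, (i < 4)%nat -> Rabs (coord q i - coord p i) < delta) ->
      Rabs (g q - g p) < eps.

Fixpoint Ck_bidisc (k : nat) (g : C2 -> R) : Prop :=
  (forall p, bidisc p -> cont_at g p) /\
  match k with
  | O => True
  | S k' => forall i, (i < 4)%nat ->
      (forall p, bidisc p -> exists l, has_pd g i p l) /\ Ck_bidisc k' (pd g i)
  end.

Definition smooth_bidisc (g : C2 -> R) : Prop := forall k, Ck_bidisc k g.

(* second real derivative  d_a d_b g  (first d_b, then d_a) *)
Definition pd2 (g : C2 -> R) (a b : nat) (p : C2) : R := pd (pd g b) a p.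

(* d^2 g / (dz_j d zbar_k), j,k in {0,1};
   = 1/4 (d_{x_j} - i d_{y_j})(d_{x_k} + i d_{y_k}) g *)
Definition ddbar (g : C2 -> R) (j k : nat) (p : C2) : Cx :=
  let xj := (2 * j)%nat in let yj := (2 * j + 1)%nat in
  let xk := (2 * k)%nat in let yk := (2 * k + 1)%nat in
  (/ 4 * (pd2 g xj xk p + pd2 g yj yk p),
   / 4 * (pd2 g xj yk p - pd2 g yj xk p)).

Definition wcomp (w : C2) (j : nat) : Cx :=
  match j with O => fst w | _ => snd w end.

Definition levi (g : C2 -> R) (p : C2) (w : C2) : R :=
  fst (Cmul (ddbar g 0 0 p) (Cmul (wcomp w 0) (Cconj (wcomp w 0)))) +
  fst (Cmul (ddbar g 0 1 p) (Cmul (wcomp w 0) (Cconj (wcomp w 1)))) +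
  fst (Cmul (ddbar g 1 0 p) (Cmul (wcomp w 1) (Cconj (wcomp w 0)))) +
  fst (Cmul (ddbar g 1 1 p) (Cmul (wcomp w 1) (Cconj (wcomp w 1)))).

Definition strictly_psh_bidisc (g : C2 -> R) : Prop :=
  forall p, bidisc p -> forall w : C2, w <> ((0, 0), (0, 0)) -> 0 < levi g p w.

(* rotation z |-> e^{i theta} z *)
Definition rot (theta : R) (z : Cx) : Cx :=
  (cos theta * fst z - sin theta * snd z, sin theta * fst z + cos theta * snd z).

Definition T_invariant (g : C2 -> R) : Prop :=
  forall p th1 th2, bidisc p -> g (rot th1 (fst p), rot th2 (snd p)) = g p.

Definition S2_invariant (g : C2 -> R) : Prop :=
  forall p, bidisc p -> g (snd p, fst p) = g p.

Definition ftilde (g : C2 -> R) (a1 a2 : R) : R := g ((tanh a1, 0), (tanh a2, 0)).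

Definition D1 (h : R -> R -> R) (a1 a2 : R) : R :=
  epsilon (inhabits 0) (fun l => derivable_pt_lim (fun t => h t a2) a1 l).
Definition D2 (h : R -> R -> R) (a1 a2 : R) : R :=
  epsilon (inhabits 0) (fun l => derivable_pt_lim (fun t => h a1 t) a2 l).

Definition Gfun (r s : R) (h : R -> R -> R) (a1 a2 : R) : R :=
  (r * sinh (2 * a1) * D1 h a1 a2 - s * sinh (2 * a2) * D2 h a1 a2)
  / (sinh a1 ^ 2 - sinh a2 ^ 2).

Definition cont2 (H : R -> R -> R) : Prop :=
  forall a1 a2 eps, 0 < eps -> exists delta, 0 < delta /\
    forall b1 b2, Rabs (b1 - a1) < delta -> Rabs (b2 - a2) < delta ->
      Rabs (H b1 b2 - H a1 a2) < eps.

From Stdlib Require Import Reals Lra Lia ClassicalEpsilon FunctionalExtensionality.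
Open Scope R_scope.

(* By T-invariance, f depends on z1 only through |z1|.  Writing u(x) for the
   x1-derivative of f at (x, 0, w), the y1-derivative at (x, t, w) is
   t u(rho)/rho with rho = sqrt(x^2 + t^2), so the second y1-derivative at
   (x, 0, w) is u(x)/x.  Strict plurisubharmonicity in the direction e1 then
   says (x u(x))' = x (f_x1x1 + u/x) > 0 on (0, 1); as x u(x) vanishes at 0,
   u > 0 there.  Since D1 f~(a1, a2) = u(tanh a1)/cosh^2 a1 this gives (i),
   oddness of D1 f~ in a1 comes from the rotation by pi, and (ii) from the
   S2-symmetry.  For (iii), G > 0 at (1, 0) forces r > 0, and multiplying G
   by sinh^2 a1 - sinh^2 1 and letting a1 decrease to 1 shows that
   (r - s) sinh 2 D1 f~(1, 1) = 0. *)

Lemma continuity_pt_elim f x : continuity_pt f x ->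
  forall eps, 0 < eps ->
  exists d, 0 < d /\ forall y, Rabs (y - x) < d -> Rabs (f y - f x) < eps.
Proof.
  intros Hf eps Heps. destruct (Hf eps Heps) as [d [Hd Hy]].
  exists d; split; [exact Hd|]. intros y Hyx.
  destruct (Req_dec y x) as [->|Hne].
  - rewrite Rminus_diag, Rabs_R0; exact Heps.
  - apply (Hy y). split; [split; [exact I|auto]|exact Hyx].
Qed.

Lemma continuity_pt_intro f x :
  (forall eps, 0 < eps ->
   exists d, 0 < d /\ forall y, Rabs (y - x) < d -> Rabs (f y - f x) < eps) ->
  continuity_pt f x.
Proof.
  intros Hf eps Heps. destruct (Hf eps Heps) as [d [Hd Hy]].
  exists d; split; [exact Hd|]. intros y [_ Hyx]. exact (Hy y Hyx).
Qed.

Lemma continuity_pt_right_zero w x :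
  continuity_pt w x -> (forall y, x < y -> w y = 0) -> w x = 0.
Proof.
  intros Hw Hzero. destruct (Req_dec (w x) 0) as [|Hne]; [assumption|exfalso].
  destruct (continuity_pt_elim _ _ Hw (Rabs (w x))) as [d [Hd Hy]].
  { apply Rabs_pos_lt; exact Hne. }
  specialize (Hy (x + d / 2)).
  rewrite Hzero, Rminus_0_l, Rabs_Ropp in Hy by lra.
  apply (Rlt_irrefl (Rabs (w x))), Hy.
  replace (x + d / 2 - x) with (d / 2) by ring. rewrite Rabs_pos_eq; lra.
Qed.

Lemma continuity_pt_right_unique u v x :
  continuity_pt u x -> continuity_pt v x ->
  (forall y, x < y -> u y = v y) -> u x = v x.
Proof.
  intros Hu Hv Huv.
  enough (E : (u - v)%F x = 0) by (unfold minus_fct in E; lra).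
  apply continuity_pt_right_zero.
  - apply continuity_pt_minus; assumption.
  - intros y Hy. unfold minus_fct. rewrite Huv by exact Hy. apply Rminus_diag.
Qed.

Lemma epsilon_derivable_pt_lim g x l : derivable_pt_lim g x l ->
  epsilon (inhabits 0) (fun l => derivable_pt_lim g x l) = l.
Proof.
  intros Hl. apply (uniqueness_limite g x); [|exact Hl].
  apply (epsilon_spec (inhabits 0) (fun l => derivable_pt_lim g x l)). eauto.
Qed.

Lemma derivable_pt_lim_mult_id_0 h : continuity_pt h 0 ->
  derivable_pt_lim (fun t => t * h t) 0 (h 0).
Proof.
  intros Hh eps Heps. destruct (continuity_pt_elim _ _ Hh eps Heps) as [d [Hd Hy]].
  exists (mkposreal _ Hd). intros k Hk Hkd. simpl in Hkd.
  replace ((0 + k) * h (0 + k) - 0 * h 0) with (k * h k) by (rewrite Rplus_0_l; ring).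
  replace (k * h k / k - h 0) with (h k - h 0) by (field; exact Hk).
  apply Hy. rewrite Rminus_0_r; exact Hkd.
Qed.

Lemma derivable_pt_lim_even k a l : (forall t, k (- t) = k t) ->
  derivable_pt_lim k a l -> derivable_pt_lim k (- a) (- l).
Proof.
  intros Hk Hl. apply (derivable_pt_lim_ext (mirr_fct k)).
  - intro t. apply Hk.
  - apply derivable_pt_lim_mirr_fwd. rewrite !Ropp_involutive. exact Hl.
Qed.

Lemma derivable_pt_lim_hypot x t : 0 < x ->
  derivable_pt_lim (fun y => sqrt (x * x + y * y)) t (t / sqrt (x * x + t * t)).
Proof.
  intros Hx.
  assert (Hpos : 0 < x * x + t * t) by nra.
  assert (Hsq : derivable_pt_lim (fun y => x * x + y * y) t (0 + (1 * t + t * 1))).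
  { apply (derivable_pt_lim_plus (fun _ => x * x) (fun y => y * y)).
    - apply derivable_pt_lim_const.
    - apply (derivable_pt_lim_mult id id); apply derivable_pt_lim_id. }
  assert (Hcomp := derivable_pt_lim_comp _ sqrt t _ _ Hsq (derivable_pt_lim_sqrt _ Hpos)).
  assert (0 < sqrt (x * x + t * t)) by (apply sqrt_lt_R0; exact Hpos).
  replace (t / sqrt (x * x + t * t))
    with (/ (2 * sqrt (x * x + t * t)) * (0 + (1 * t + t * 1))) by (field; lra).
  exact Hcomp.
Qed.

Lemma cosh_pos x : 0 < cosh x.
Proof. unfold cosh. generalize (exp_pos x) (exp_pos (- x)); lra. Qed.

Lemma sinh_pos x : 0 < x -> 0 < sinh x.
Proof. intros Hx. rewrite <- sinh_0. apply sinh_lt; exact Hx. Qed.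

Lemma sinh_opp x : sinh (- x) = - sinh x.
Proof. unfold sinh. rewrite Ropp_involutive. field. Qed.

Lemma cosh_opp x : cosh (- x) = cosh x.
Proof. unfold cosh. rewrite Ropp_involutive. field. Qed.

Lemma tanh_opp x : tanh (- x) = - tanh x.
Proof. unfold tanh. rewrite sinh_opp, cosh_opp. field. apply Rgt_not_eq, cosh_pos. Qed.

Lemma tanh_pos x : 0 < x -> 0 < tanh x.
Proof. intros Hx. apply Rdiv_lt_0_compat; [apply sinh_pos; exact Hx|apply cosh_pos]. Qed.

Lemma cosh_sqr_sub_sinh_sqr x : cosh x * cosh x - sinh x * sinh x = 1.
Proof. unfold cosh, sinh. rewrite exp_Ropp. field. apply Rgt_not_eq, exp_pos. Qed.

Lemma tanh_sqr_lt_1 x : tanh x * tanh x < 1.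
Proof.
  assert (Hc := cosh_pos x). assert (E := cosh_sqr_sub_sinh_sqr x).
  assert (Hcc : 0 < cosh x * cosh x) by nra.
  unfold tanh. replace (sinh x / cosh x * (sinh x / cosh x))
    with (sinh x * sinh x / (cosh x * cosh x)) by (field; lra).
  apply (Rmult_lt_reg_r (cosh x * cosh x)); [exact Hcc|].
  unfold Rdiv. rewrite Rmult_assoc, Rinv_l by lra. lra.
Qed.

Lemma derivable_pt_lim_tanh x : derivable_pt_lim tanh x (/ (cosh x * cosh x)).
Proof.
  assert (Hc := cosh_pos x).
  assert (Hdiv := derivable_pt_lim_div sinh cosh x _ _ (derivable_pt_lim_sinh x)
                    (derivable_pt_lim_cosh x) (Rgt_not_eq _ _ Hc)).
  replace (/ (cosh x * cosh x))
    with ((cosh x * cosh x - sinh x * sinh x) / (cosh x)²)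
    by (rewrite cosh_sqr_sub_sinh_sqr; unfold Rsqr; field; lra).
  exact Hdiv.
Qed.

Lemma continuity_pt_tanh x : continuity_pt tanh x.
Proof.
  apply derivable_continuous_pt. exists (/ (cosh x * cosh x)).
  apply derivable_pt_lim_tanh.
Qed.

Lemma upd_coord p i : upd p i (coord p i) = p.
Proof. destruct p as [[x1 y1] [x2 y2]]. destruct i as [|[|[|[|i]]]]; reflexivity. Qed.

Lemma cont_at_upd g p i : (i < 4)%nat -> cont_at g p ->
  continuity_pt (fun t => g (upd p i t)) (coord p i).
Proof.
  intros Hi Hg. apply continuity_pt_intro. intros eps Heps.
  destruct (Hg eps Heps) as [d [Hd Hq]]. exists d; split; [exact Hd|].
  intros t Ht. rewrite upd_coord. apply Hq. intros j Hj.
  destruct p as [[x1 y1] [x2 y2]].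
  destruct i as [|[|[|[|i]]]]; try lia; destruct j as [|[|[|[|j]]]]; try lia;
    simpl; solve [exact Ht | rewrite Rminus_diag, Rabs_R0; exact Hd].
Qed.

Lemma pd_eq g i p l : has_pd g i p l -> pd g i p = l.
Proof. apply epsilon_derivable_pt_lim. Qed.

Lemma has_pd_pd g i p : (exists l, has_pd g i p l) -> has_pd g i p (pd g i p).
Proof. intros [l Hl]. rewrite (pd_eq _ _ _ _ Hl). exact Hl. Qed.

Lemma D1_eq h a1 a2 l : derivable_pt_lim (fun t => h t a2) a1 l -> D1 h a1 a2 = l.
Proof. apply epsilon_derivable_pt_lim. Qed.

Lemma levi_e1 g p :
  levi g p ((1, 0), (0, 0)) = / 4 * (pd2 g 0 0 p + pd2 g 1 1 p).
Proof. unfold levi, ddbar, Cmul, Cconj, wcomp; simpl. ring. Qed.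

Lemma bidisc_axis x w : x * x < 1 -> Cnorm2 w < 1 -> bidisc ((x, 0), w).
Proof. intros Hx Hw. unfold bidisc, Cnorm2; simpl. split; [lra|exact Hw]. Qed.

Section RotationInvariant.

Variable f : C2 -> R.
Hypothesis Hsmooth : smooth_bidisc f.

Lemma smooth_has_pd i p : (i < 4)%nat -> bidisc p -> has_pd f i p (pd f i p).
Proof.
  intros Hi Hp. destruct (Hsmooth 1%nat) as [_ H1]. destruct (H1 i Hi) as [Hex _].
  apply has_pd_pd, Hex, Hp.
Qed.

Lemma smooth_cont_pd i p : (i < 4)%nat -> bidisc p -> cont_at (pd f i) p.
Proof.
  intros Hi Hp. destruct (Hsmooth 1%nat) as [_ H1]. destruct (H1 i Hi) as [_ [Hc _]].
  apply Hc, Hp.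
Qed.

Lemma smooth_has_pd2 i j p : (i < 4)%nat -> (j < 4)%nat -> bidisc p ->
  has_pd (pd f i) j p (pd2 f j i p).
Proof.
  intros Hi Hj Hp. destruct (Hsmooth 2%nat) as [_ H2]. destruct (H2 i Hi) as [_ [_ H1]].
  destruct (H1 j Hj) as [Hex _]. apply has_pd_pd, Hex, Hp.
Qed.

Hypothesis HT : T_invariant f.

Lemma T_invariant_radial x y w : 0 < x -> x * x + y * y < 1 -> Cnorm2 w < 1 ->
  f ((x, y), w) = f ((sqrt (x * x + y * y), 0), w).
Proof.
  intros Hx Hxy Hw.
  set (rho := sqrt (x * x + y * y)).
  assert (Hrho : bidisc ((rho, 0), w)).
  { apply bidisc_axis; [|exact Hw]. unfold rho. rewrite sqrt_sqrt by nra. exact Hxy. }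
  rewrite <- (HT _ (atan (y / x)) 0 Hrho). f_equal.
  unfold rot; simpl. rewrite cos_0, sin_0, sin_atan, cos_atan.
  set (c := sqrt (1 + (y / x)²)).
  assert (Hc : 0 < c) by (apply sqrt_lt_R0; unfold Rsqr; nra).
  assert (Hcc : c * c = 1 + (y / x) * (y / x))
    by (unfold c; rewrite sqrt_sqrt; unfold Rsqr; nra).
  assert (Hr : rho = c * x).
  { unfold rho. replace (x * x + y * y) with ((c * x) * (c * x)).
    - apply sqrt_square; nra.
    - replace ((c * x) * (c * x)) with ((c * c) * (x * x)) by ring. rewrite Hcc. field. lra. }
  rewrite Hr. destruct w as [w1 w2].
  simpl. apply injective_projections; apply injective_projections; simpl; field; lra.
Qed.

Lemma slice_interval x t : x * x + t * t < 1 ->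
  let c := sqrt (1 - x * x) in
  - c < t < c /\ forall y, - c < y < c -> x * x + y * y < 1.
Proof.
  intros Hxt c.
  assert (Hc : 0 <= c) by apply sqrt_pos.
  assert (Hcc : c * c = 1 - x * x) by (apply sqrt_sqrt; nra).
  split; [split; nra|]. intros y Hy. nra.
Qed.

Lemma pd_y1_radial x t w : 0 < x -> x * x + t * t < 1 -> Cnorm2 w < 1 ->
  pd f 1 ((x, t), w) =
  t * (pd f 0 ((sqrt (x * x + t * t), 0), w) / sqrt (x * x + t * t)).
Proof.
  intros Hx Hxt Hw. apply pd_eq. unfold has_pd; simpl.
  set (rho := fun y => sqrt (x * x + y * y)).
  assert (Hr : 0 < rho t) by (apply sqrt_lt_R0; nra).
  assert (Hrr : rho t * rho t = x * x + t * t) by (apply sqrt_sqrt; nra).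
  destruct (slice_interval x t Hxt) as [Ht Hslice].
  apply (derivable_pt_lim_locally_ext (comp (fun z => f ((z, 0), w)) rho)
           _ _ _ _ _ Ht).
  { intros y Hy. unfold comp, rho. symmetry. apply T_invariant_radial; auto. }
  replace (t * (pd f 0 ((sqrt (x * x + t * t), 0), w) / sqrt (x * x + t * t)))
    with (pd f 0 ((rho t, 0), w) * (t / rho t)) by (unfold rho; field; fold (rho t); lra).
  apply derivable_pt_lim_comp.
  - apply derivable_pt_lim_hypot; exact Hx.
  - apply (smooth_has_pd 0 ((rho t, 0), w)); [lia|].
    apply bidisc_axis; [lra|exact Hw].
Qed.

Lemma pd2_y1y1_axis x w : 0 < x < 1 -> Cnorm2 w < 1 ->
  pd2 f 1 1 ((x, 0), w) = pd f 0 ((x, 0), w) / x.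
Proof.
  intros Hx Hw. unfold pd2. apply pd_eq. unfold has_pd; simpl.
  set (rho := fun y => sqrt (x * x + y * y)).
  set (h := fun y => pd f 0 ((rho y, 0), w) / rho y).
  assert (Hrho0 : rho 0 = x)
    by (unfold rho; rewrite Rmult_0_l, Rplus_0_r; apply sqrt_square; lra).
  assert (Hrho_cont : continuity_pt rho 0) by (unfold rho; reg; nra).
  replace (pd f 0 ((x, 0), w) / x) with (h 0) by (unfold h; rewrite Hrho0; reflexivity).
  destruct (slice_interval x 0 ltac:(nra)) as [H0 Hslice].
  apply (derivable_pt_lim_locally_ext (fun y => y * h y) _ _ _ _ _ H0).
  { intros y Hy. symmetry. apply pd_y1_radial; auto; lra. }
  apply derivable_pt_lim_mult_id_0. unfold h.
  change (continuity_pt ((comp (fun z => pd f 0 ((z, 0), w)) rho) / rho)%F 0).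
  apply continuity_pt_div; [|exact Hrho_cont|lra].
  apply continuity_pt_comp; [exact Hrho_cont|]. rewrite Hrho0.
  apply (cont_at_upd (pd f 0) ((x, 0), w) 0); [lia|].
  apply smooth_cont_pd; [lia|]. apply bidisc_axis; [nra|exact Hw].
Qed.

Hypothesis Hpsh : strictly_psh_bidisc f.

(* Levi positivity at e1 reads (x u(x))' > 0 for u(x) = d_x1 f(x, 0, w). *)
Lemma pd_x1_axis_pos x w : 0 < x < 1 -> Cnorm2 w < 1 -> 0 < pd f 0 ((x, 0), w).
Proof.
  intros Hx Hw.
  set (u := fun z => pd f 0 ((z, 0), w)).
  set (psi' := fun z => 1 * u z + z * pd2 f 0 0 ((z, 0), w)).
  destruct (MVT_cor2 (fun z => z * u z) psi' 0 x ltac:(lra)) as [c [Hmvt Hc]].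
  { intros c Hc. apply (derivable_pt_lim_mult id u); [apply derivable_pt_lim_id|].
    apply (smooth_has_pd2 0 0 ((c, 0), w)); [lia|lia|].
    apply bidisc_axis; [nra|exact Hw]. }
  assert (Hlevi : 0 < levi f ((c, 0), w) ((1, 0), (0, 0))).
  { apply Hpsh; [apply bidisc_axis; [nra|exact Hw]|].
    intro E. injection E. lra. }
  rewrite levi_e1, pd2_y1y1_axis in Hlevi by (lra || exact Hw).
  assert (Hpsi' : 0 < psi' c).
  { unfold psi'. fold (u c) in Hlevi.
    replace (1 * u c + c * pd2 f 0 0 ((c, 0), w))
      with (c * (pd2 f 0 0 ((c, 0), w) + u c / c)) by (field; lra).
    apply Rmult_lt_0_compat; lra. }
  rewrite Rmult_0_l, !Rminus_0_r in Hmvt.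
  fold (u x). nra.
Qed.

End RotationInvariant.

Lemma bidisc_tanh a b : bidisc ((tanh a, 0), (tanh b, 0)).
Proof.
  unfold bidisc, Cnorm2; simpl.
  rewrite !Rmult_0_l, !Rplus_0_r. split; apply tanh_sqr_lt_1.
Qed.

Lemma cont2_cont_l H a b : cont2 H -> continuity_pt (fun z => H z b) a.
Proof.
  intros HH. apply continuity_pt_intro. intros eps Heps.
  destruct (HH a b eps Heps) as [d [Hd Hq]]. exists d; split; [exact Hd|].
  intros y Hy. apply Hq; [exact Hy|]. rewrite Rminus_diag, Rabs_R0. exact Hd.
Qed.

Section Ftilde.

Variable f : C2 -> R.
Hypothesis Hsmooth : smooth_bidisc f.
Hypothesis HT : T_invariant f.
Hypothesis HS : S2_invariant f.
Hypothesis Hpsh : strictly_psh_bidisc f.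

Lemma derivable_pt_lim_ftilde_l a b :
  derivable_pt_lim (fun t => ftilde f t b) a
    (pd f 0 ((tanh a, 0), (tanh b, 0)) / (cosh a * cosh a)).
Proof.
  change (fun t => ftilde f t b)
    with (comp (fun z => f (upd ((tanh a, 0), (tanh b, 0)) 0 z)) tanh).
  apply derivable_pt_lim_comp; [apply derivable_pt_lim_tanh|].
  apply smooth_has_pd; [exact Hsmooth|lia|apply bidisc_tanh].
Qed.

Lemma D1_ftilde a b :
  D1 (ftilde f) a b = pd f 0 ((tanh a, 0), (tanh b, 0)) / (cosh a * cosh a).
Proof. apply D1_eq, derivable_pt_lim_ftilde_l. Qed.

Lemma ftilde_swap a b : ftilde f a b = ftilde f b a.
Proof. symmetry. exact (HS _ (bidisc_tanh a b)). Qed.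

(* z1 |-> -z1 is the rotation by pi. *)
Lemma ftilde_opp_l a b : ftilde f (- a) b = ftilde f a b.
Proof.
  unfold ftilde. rewrite <- (HT _ PI 0 (bidisc_tanh a b)).
  unfold rot; simpl. rewrite cos_PI, sin_PI, cos_0, sin_0, tanh_opp.
  f_equal. apply injective_projections; apply injective_projections; simpl; ring.
Qed.

Lemma ftilde_opp_r a b : ftilde f a (- b) = ftilde f a b.
Proof. rewrite ftilde_swap, ftilde_opp_l, ftilde_swap. reflexivity. Qed.

Lemma D2_ftilde a b : D2 (ftilde f) a b = D1 (ftilde f) b a.
Proof.
  unfold D1, D2. replace (fun t => ftilde f a t) with (fun t => ftilde f t a).
  - reflexivity.
  - apply functional_extensionality. intro t. apply ftilde_swap.
Qed.

Lemma D1_ftilde_opp_l a b : D1 (ftilde f) (- a) b = - D1 (ftilde f) a b.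
Proof.
  apply D1_eq. rewrite D1_ftilde.
  apply (derivable_pt_lim_even (fun t => ftilde f t b)).
  - intro t. apply ftilde_opp_l.
  - apply derivable_pt_lim_ftilde_l.
Qed.

Lemma D1_ftilde_opp_r a b : D1 (ftilde f) a (- b) = D1 (ftilde f) a b.
Proof.
  unfold D1. replace (fun t => ftilde f t (- b)) with (fun t => ftilde f t b).
  - reflexivity.
  - apply functional_extensionality. intro t. symmetry. apply ftilde_opp_r.
Qed.

Lemma D1_ftilde_0 b : D1 (ftilde f) 0 b = 0.
Proof. assert (E := D1_ftilde_opp_l 0 b). rewrite Ropp_0 in E. lra. Qed.

Lemma D1_ftilde_pos a b : 0 < a -> 0 < D1 (ftilde f) a b.
Proof.
  intros Ha. rewrite D1_ftilde. assert (Hc := cosh_pos a).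
  apply Rdiv_lt_0_compat; [|nra].
  apply pd_x1_axis_pos; [exact Hsmooth|exact HT|exact Hpsh| |].
  - assert (Ht := tanh_pos a Ha). assert (Ht1 := tanh_sqr_lt_1 a). split; nra.
  - unfold Cnorm2; simpl. rewrite Rmult_0_l, Rplus_0_r. apply tanh_sqr_lt_1.
Qed.

Lemma D1_ftilde_neg a b : a < 0 -> D1 (ftilde f) a b < 0.
Proof.
  intros Ha. rewrite <- (Ropp_involutive a), D1_ftilde_opp_l.
  assert (0 < D1 (ftilde f) (- a) b) by (apply D1_ftilde_pos; lra). lra.
Qed.

Lemma D1_ftilde_cont_l a b : continuity_pt (fun z => D1 (ftilde f) z b) a.
Proof.
  apply (continuity_pt_locally_ext
           (fun z => pd f 0 ((tanh z, 0), (tanh b, 0)) / (cosh z * cosh z)) _ 1);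
    [lra|intros; symmetry; apply D1_ftilde|].
  apply continuity_pt_div; [|reg|assert (Hc := cosh_pos a); nra].
  change (fun z => pd f 0 ((tanh z, 0), (tanh b, 0)))
    with (comp (fun t => pd f 0 (upd ((tanh a, 0), (tanh b, 0)) 0 t)) tanh).
  apply continuity_pt_comp; [apply continuity_pt_tanh|].
  apply (cont_at_upd (pd f 0) ((tanh a, 0), (tanh b, 0)) 0); [lia|].
  apply smooth_cont_pd; [exact Hsmooth|lia|apply bidisc_tanh].
Qed.

Lemma D1_ftilde_cont_r a b : continuity_pt (fun z => D1 (ftilde f) a z) b.
Proof.
  apply (continuity_pt_locally_ext
           (fun z => pd f 0 ((tanh a, 0), (tanh z, 0)) / (cosh a * cosh a)) _ 1);
    [lra|intros; symmetry; apply D1_ftilde|].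
  apply continuity_pt_div; [|reg|assert (Hc := cosh_pos a); nra].
  change (fun z => pd f 0 ((tanh a, 0), (tanh z, 0)))
    with (comp (fun t => pd f 0 (upd ((tanh a, 0), (tanh b, 0)) 2 t)) tanh).
  apply continuity_pt_comp; [apply continuity_pt_tanh|].
  apply (cont_at_upd (pd f 0) ((tanh a, 0), (tanh b, 0)) 2); [lia|].
  apply smooth_cont_pd; [exact Hsmooth|lia|apply bidisc_tanh].
Qed.

Lemma Gfun_opp_l r s a1 a2 : Gfun r s (ftilde f) (- a1) a2 = Gfun r s (ftilde f) a1 a2.
Proof.
  unfold Gfun. rewrite !D2_ftilde, D1_ftilde_opp_l, D1_ftilde_opp_r.
  replace (2 * - a1) with (- (2 * a1)) by ring. rewrite !sinh_opp. f_equal; ring.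
Qed.

Lemma Gfun_opp_r r s a1 a2 : Gfun r s (ftilde f) a1 (- a2) = Gfun r s (ftilde f) a1 a2.
Proof.
  unfold Gfun. rewrite !D2_ftilde, D1_ftilde_opp_l, D1_ftilde_opp_r.
  replace (2 * - a2) with (- (2 * a2)) by ring. rewrite !sinh_opp. f_equal; ring.
Qed.

Lemma Gfun_swap r a1 a2 : Gfun r r (ftilde f) a2 a1 = Gfun r r (ftilde f) a1 a2.
Proof.
  unfold Gfun. rewrite !D2_ftilde.
  replace (sinh a2 ^ 2 - sinh a1 ^ 2) with (- (sinh a1 ^ 2 - sinh a2 ^ 2)) by ring.
  rewrite Rdiv_opp_r, <- Rdiv_opp_l. f_equal. ring.
Qed.

Section PositiveExtension.

Variables (r s : R) (H : R -> R -> R).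
Hypothesis H_cont : cont2 H.
Hypothesis H_pos : forall a1 a2, 0 < H a1 a2.
Hypothesis H_Gfun :
  forall a1 a2, sinh a1 ^ 2 <> sinh a2 ^ 2 -> H a1 a2 = Gfun r s (ftilde f) a1 a2.

(* At (1, 0) the s-term of G vanishes. *)
Lemma extension_r_pos : 0 < r.
Proof.
  assert (Hs1 : 0 < sinh 1) by (apply sinh_pos; lra).
  assert (Hs2 : 0 < sinh (2 * 1)) by (apply sinh_pos; lra).
  assert (HD := D1_ftilde_pos 1 0 ltac:(lra)).
  assert (E := H_Gfun 1 0 ltac:(rewrite sinh_0; nra)).
  unfold Gfun in E. rewrite Rmult_0_r, sinh_0 in E.
  assert (E' : r * (sinh (2 * 1) * D1 (ftilde f) 1 0) = H 1 0 * sinh 1 ^ 2)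
    by (rewrite E; field; nra).
  assert (0 < H 1 0 * sinh 1 ^ 2) by (apply Rmult_lt_0_compat; [apply H_pos|nra]).
  assert (0 < sinh (2 * 1) * D1 (ftilde f) 1 0) by (apply Rmult_lt_0_compat; assumption).
  nra.
Qed.

(* Clearing the denominator of G along a1 > 1, a2 = 1 and letting a1 tend to 1. *)
Lemma extension_r_eq_s : r = s.
Proof.
  set (num := fun z => r * sinh (2 * z) * D1 (ftilde f) z 1
                       - s * sinh (2 * 1) * D1 (ftilde f) 1 z).
  set (den := fun z => H z 1 * (sinh z ^ 2 - sinh 1 ^ 2)).
  assert (E : num 1 = den 1).
  { apply continuity_pt_right_unique.
    - unfold num. apply continuity_pt_minus; apply continuity_pt_mult;
        try apply D1_ftilde_cont_l; try apply D1_ftilde_cont_r; reg.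
    - unfold den. apply continuity_pt_mult; [apply cont2_cont_l, H_cont|reg].
    - intros z Hz. assert (0 < sinh 1) by (apply sinh_pos; lra).
      assert (sinh 1 < sinh z) by (apply sinh_lt; exact Hz).
      assert (Hden : sinh z ^ 2 - sinh 1 ^ 2 <> 0) by nra.
      unfold num, den. rewrite H_Gfun by (intro; apply Hden; lra).
      unfold Gfun. rewrite D2_ftilde. field. exact Hden. }
  unfold num, den in E. rewrite Rminus_diag, Rmult_0_r in E.
  assert (0 < sinh (2 * 1)) by (apply sinh_pos; lra).
  assert (0 < D1 (ftilde f) 1 1) by (apply D1_ftilde_pos; lra).
  assert (E' : (r - s) * (sinh (2 * 1) * D1 (ftilde f) 1 1) = 0) by (rewrite <- E; ring).
  apply Rmult_integral in E' as [E'|E']; nra.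
Qed.

End PositiveExtension.

End Ftilde.

Theorem lemma2p5 (f : C2 -> R) (r s : R)
  (Hsmooth : smooth_bidisc f)
  (HT : T_invariant f) (HS : S2_invariant f)
  (Hpsh : strictly_psh_bidisc f) :
  let ft := ftilde f in
  (* partial derivatives of ft exist *)
  (forall a1 a2, exists l, derivable_pt_lim (fun t => ft t a2) a1 l) /\
  (forall a1 a2, exists l, derivable_pt_lim (fun t => ft a1 t) a2 l) /\
  (* (i) *)
  (forall a1 a2, 0 < a1 -> 0 < D1 ft a1 a2) /\
  (forall a1 a2, a1 < 0 -> D1 ft a1 a2 < 0) /\
  (forall a2, D1 ft 0 a2 = 0) /\
  (* (ii) *)
  (forall a1 a2, D2 ft a1 a2 = D1 ft a2 a1) /\
  (forall a1, D2 ft a1 0 = 0) /\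
  (* (iii) *)
  ((exists H : R -> R -> R, cont2 H /\ (forall a1 a2, 0 < H a1 a2) /\
      forall a1 a2, sinh a1 ^ 2 <> sinh a2 ^ 2 -> H a1 a2 = Gfun r s ft a1 a2) ->
   r = s /\ 0 < r /\
   (forall a1 a2, sinh a1 ^ 2 <> sinh a2 ^ 2 ->
      Gfun r s ft a2 a1 = Gfun r s ft a1 a2 /\
      Gfun r s ft (- a1) a2 = Gfun r s ft a1 a2 /\
      Gfun r s ft a1 (- a2) = Gfun r s ft a1 a2)).
Proof.
  intros ft. subst ft.
  assert (HD1 : forall a1 a2, exists l, derivable_pt_lim (fun t => ftilde f t a2) a1 l)
    by (intros; eexists; apply derivable_pt_lim_ftilde_l; exact Hsmooth).
  split; [exact HD1|].
  split.
  { intros a1 a2. destruct (HD1 a2 a1) as [l Hl]. exists l.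
    apply (derivable_pt_lim_ext (fun t => ftilde f t a1)); [|exact Hl].
    intro t. apply ftilde_swap, HS. }
  split; [intros; apply D1_ftilde_pos; assumption|].
  split; [intros; apply D1_ftilde_neg; assumption|].
  split; [intros; apply D1_ftilde_0; assumption|].
  split; [intros; apply D2_ftilde, HS|].
  split; [intros; rewrite D2_ftilde by exact HS; apply D1_ftilde_0; assumption|].
  intros [H [H_cont [H_pos H_Gfun]]].
  assert (Hrs := extension_r_eq_s f Hsmooth HT HS Hpsh r s H H_cont H_Gfun).
  subst s.
  split; [reflexivity|].
  split; [exact (extension_r_pos f Hsmooth HT Hpsh r r H H_pos H_Gfun)|].
  intros a1 a2 _.
  split; [apply Gfun_swap; exact HS|].
  split; [apply Gfun_opp_l|apply Gfun_opp_r]; assumption.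
Qed.
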